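(* Let $R\in\mathbb{R}[x]$, $\delta\in\mathbb{R}$, and $Q=R\circ x^2\circ(x-\delta)$, with $n=\deg Q$. 1) If $n\ge6$ and $Ch_2(Q)=Ch_3(Q)=0$, then $4\delta$ is not an algebraic integer unless $\delta=0$. 2) If $n\ge9$ and $Ch_2(Q)=Ch_4(Q)=Ch_5(Q)=0$, then $4\delta$ is not an algebraic integer unless $\delta=0$.
   Context: $T_k$ denotes the Chebyshev polynomial of the first kind of degree $k$, $T_k(\cos\phi)=\cos(k\phi)$. Every real polynomial $Q$ of degree $n$ can be uniquely written as $Q=\sum_{k=0}^n d_kT_k$ with $d_k\in\mathbb{R}$; set $Ch_i(Q)=d_{n-i}$ for $0\le i\le n$. An algebraic integer is a complex root of a monic polynomial with integer coefficients. $Q(x)=R((x-\delta)^2)$. *)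

From HB Require Import structures.
From mathcomp Require Import all_boot all_order all_algebra.
Set Implicit Arguments. Unset Strict Implicit. Unset Printing Implicit Defensive.
Import Order.TTheory GRing.Theory Num.Theory.
Local Open Scope ring_scope.

(* Chebyshev polynomials of the first kind: T_0 = 1, T_1 = X,
   T_(k+2) = 2 X T_(k+1) - T_k  (equivalently T_k(cos t) = cos(k t)). *)
Fixpoint chebT_pair (R : nzRingType) (k : nat) : {poly R} * {poly R} :=
  match k with
  | 0 => (1, 'X)
  | k'.+1 => let: (a, b) := chebT_pair R k' in (b, 'X *+ 2 * b - a)
  end.

Definition chebT (R : nzRingType) (k : nat) : {poly R} := (chebT_pair R k).1.

Definition cheb_coords (R : nzRingType) (Q : {poly R}) (d : nat -> R) : Prop :=
  Q = \sum_(k < (size Q).-1.+1) d k *: chebT R k.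

(* Ch_i(Q) = 0, i.e. d_(n-i) = 0 where n = deg Q. Since the Chebyshev
   expansion is unique, this is stated via the coordinate sequence. *)
Definition Ch_zero (R : nzRingType) (Q : {poly R}) (is_ : seq nat) : Prop :=
  exists d : nat -> R, cheb_coords Q d /\
    forall i, i \in is_ -> d ((size Q).-1 - i)%N = 0.

Definition is_algint (R : nzRingType) (x : R) : Prop :=
  exists p : {poly int}, p \is monic /\ root (map_poly intr p) x.

From HB Require Import structures.
From mathcomp Require Import all_boot all_order all_algebra.
From mathcomp Require Import ring zify.
Set Implicit Arguments. Unset Strict Implicit. Unset Printing Implicit Defensive.
Import Order.TTheory GRing.Theory Num.Theory.
Local Open Scope ring_scope.

(* Let d be the Chebyshev coordinates of Q, n = deg Q. As T_k has leading coefficient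
   2^(k-1), vanishing coefficients at degrees k-1, k-3, k-5 and coefficients
   -k 2^(k-3) and k(k-3) 2^(k-5) at degrees k-2 and k-4, each of d_(n-2), ..., d_(n-5)
   is a fixed linear combination of the top six coefficients of Q.  Since
   Q(x) = R((x - delta)^2), these coefficients are binomial expressions in delta and the
   top three coefficients of R.  Eliminating R from the vanishing conditions leaves an
   equation over Z for z = 4 delta:
     (n-1)(n-2) z^2 = 12                                        in case 1,
     (n-1)(n-2)(n-3)(n-4) z^4 - 30 (n-2)(n-3) z^2 + 120 = 0     in case 2.
   If an algebraic integer w satisfies a w^2 + b w + c = 0 over Z, pseudo-divide a monic
   integer equation of w by this quadratic: a zero remainder forces a | c by Gauss's
   lemma on contents, and a nonzero (hence linear) one makes w a rational integer.
   For the equations above both alternatives fail because the leading coefficient is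
   too large. *)

Section ChebyshevRecurrence.
Variable R : nzRingType.
Notation T := (chebT R).

Lemma chebT_pairE k : chebT_pair R k = (T k, T k.+1).
Proof. by elim: k => [//|k IH]; rewrite /chebT /= IH. Qed.

Lemma chebTSS k : T k.+2 = 'X *+ 2 * T k.+1 - T k.
Proof. by rewrite {1}/chebT /= chebT_pairE. Qed.

Lemma coef0_chebTSS k : (T k.+2)`_0 = - (T k)`_0.
Proof. by rewrite chebTSS coefB mulrnAl coefMn coefXM /= mul0rn sub0r. Qed.

Lemma coefS_chebTSS k i : (T k.+2)`_i.+1 = 2 * (T k.+1)`_i - (T k)`_i.+1.
Proof. by rewrite chebTSS coefB (mulrnAl (R:={poly R})) coefMn coefXM /= mulr_natl. Qed.

Lemma coef_chebT_eq0 k i : (k < i)%N || odd (k + i) -> (T k)`_i = 0.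
Proof.
elim/ltn_ind: k i => -[|[|k]] IH i.
- by rewrite coefC; case: i.
- by rewrite coefX; case: i => [|[|]].
case: i => [|i] hi.
  by rewrite coef0_chebTSS IH ?oppr0 //; move: hi; rewrite !addn0 /= negbK.
rewrite coefS_chebTSS !IH ?subrr ?mulr0 ?subr0 //.
all: move: hi; rewrite !addnS ?addSn /= ?negbK => /orP[h|h]; apply/orP; [left; lia | by right].
Qed.

Lemma lead_coef_chebT k : (T k.+1)`_k.+1 = 2 ^+ k.
Proof.
elim: k => [|k IH]; first by rewrite coefX.
by rewrite coefS_chebTSS IH coef_chebT_eq0 ?leqnSn // subr0 exprS.
Qed.

End ChebyshevRecurrence.

Section ChebyshevSubleading.
Variable F : numFieldType.
Notation T := (chebT F).

Lemma coef_chebT_sub2 k : (T k.+2)`_k = - (k.+2)%:R * 2 ^+ k / 2.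
Proof.
elim: k => [|k IH]; first by rewrite coef0_chebTSS coef1 /=; field.
by rewrite coefS_chebTSS IH lead_coef_chebT exprS -natr1; field.
Qed.

Lemma coef_chebT_sub4 k : (T k.+4)`_k = (k.+4)%:R * (k.+1)%:R * 2 ^+ k / 4.
Proof.
elim: k => [|k IH]; first by rewrite !coef0_chebTSS coef1 /=; field.
by rewrite coefS_chebTSS IH coef_chebT_sub2 exprS -!natr1; field.
Qed.
End ChebyshevSubleading.

Section ChebyshevTopCoordinates.
Variables (F : numFieldType) (Q : {poly F}) (d : nat -> F) (k : nat).
Hypothesis Q_cheb : Q = \sum_(i < 7 + k) d i *: chebT F i.
Notation T := (chebT F).

Lemma coef_cheb_top l : (k < l)%N ->
  Q`_l = d (1 + k) * (T (1 + k))`_l + d (2 + k) * (T (2 + k))`_l + d (3 + k) * (T (3 + k))`_l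
         + d (4 + k) * (T (4 + k))`_l + d (5 + k) * (T (5 + k))`_l + d (6 + k) * (T (6 + k))`_l.
Proof.
move=> lt_kl; rewrite Q_cheb coef_sum.
do 6 rewrite big_ord_recr /=.
rewrite big1 ?add0r ?coefZ // => i _.
by rewrite coefZ coef_chebT_eq0 ?mulr0 // (leq_ltn_trans _ lt_kl) // -ltnS.
Qed.

Local Ltac expand_cheb :=
  rewrite !coef_cheb_top; try lia;
  rewrite ?lead_coef_chebT ?coef_chebT_sub2 ?coef_chebT_sub4 !coef_chebT_eq0; try lia;
  rewrite ?mulr0 ?addr0 ?add0r ?exprS; field.

Lemma cheb_coord_top2 : 2 ^+ (5 + k) * d (4 + k) = 4 * Q`_(4 + k) + (6 + k)%:R * Q`_(6 + k).
Proof. by expand_cheb. Qed.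

Lemma cheb_coord_top3 : 2 ^+ (4 + k) * d (3 + k) = 4 * Q`_(3 + k) + (5 + k)%:R * Q`_(5 + k).
Proof. by expand_cheb. Qed.

Lemma cheb_coord_top4 :
  2 ^+ (6 + k) * d (2 + k)
  = 32 * Q`_(2 + k) + 8 * (4 + k)%:R * Q`_(4 + k) + (6 + k)%:R * (5 + k)%:R * Q`_(6 + k).
Proof. by expand_cheb. Qed.

Lemma cheb_coord_top5 :
  2 ^+ (5 + k) * d (1 + k)
  = 32 * Q`_(1 + k) + 8 * (3 + k)%:R * Q`_(3 + k) + (5 + k)%:R * (4 + k)%:R * Q`_(5 + k).
Proof. by expand_cheb. Qed.

End ChebyshevTopCoordinates.

Lemma coef_XsubC_exp (R : comNzRingType) (c : R) n l :
  (('X - c%:P) ^+ n)`_l = 'C(n, l)%:R * (- c) ^+ (n - l).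
Proof.
rewrite addrC -polyCN exprDn coef_sum.
under eq_bigr => i _ do rewrite coefMn -rmorphXn coefCM coefXn mulr_natr mulrb eq_sym.
rewrite (eq_bigr (fun i : 'I_n.+1 => if i == l :> nat then (- c) ^+ (n - l) *+ 'C(n, l) else 0));
  last by move=> i _; case: eqP => [->|]; rewrite ?mul0rn.
rewrite -big_mkcond (big_ord1_eq _ (fun _ => (- c) ^+ (n - l) *+ 'C(n, l))).
by case: ltnP => [_|lt_nl]; rewrite ?mulr_natl // bin_small // mulr0n.
Qed.

Lemma coef_XsubC_expD (F : numFieldType) (c : F) j l :
  (('X - c%:P) ^+ (j + l))`_l = ((j + l) ^_ j)%:R / (j`!)%:R * (- c) ^+ j.
Proof.
rewrite coef_XsubC_exp addnK -bin_sub ?leq_addl // addnK.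
by rewrite -bin_ffact natrM mulfK // pnatr_eq0 -lt0n fact_gt0.
Qed.

Section EvenShift.
Variables (F : numFieldType) (R : {poly F}) (c : F) (s : nat).
Hypothesis size_R : (size R = 4 + s)%N.
Let Q := R \Po (('X - c%:P) ^+ 2).
Let k := s.*2.
Let a := R`_(3 + s).
Let b := R`_(2 + s).
Let e := R`_(1 + s).

Lemma coef_comp_top l : (k < l)%N ->
  Q`_l = e * (('X - c%:P) ^+ (2 + k))`_l + b * (('X - c%:P) ^+ (4 + k))`_l
         + a * (('X - c%:P) ^+ (6 + k))`_l.
Proof.
move=> lt_kl; rewrite /Q coef_comp_poly size_R.
rewrite big_ord_recr big_ord_recr big_ord_recr /= big1 ?add0r => [|i _].
  by rewrite -!exprM !mul2n.
rewrite -exprM [X in _ * X]nth_default ?mulr0 // size_exp_XsubC mul2n.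
by apply: leq_ltn_trans lt_kl; rewrite leq_double -ltnS.
Qed.

Local Ltac eval_top := rewrite ?ffactSS ?ffactn0 ?factS ?fact0 ?natrM; field.

Lemma coef_comp_top0 : Q`_(6 + k) = a.
Proof.
rewrite coef_comp_top; last lia.
rewrite (coef_XsubC_expD c 0 (6 + k)) [X in e * X]nth_default ?[X in b * X]nth_default
  ?size_exp_XsubC; try lia.
by eval_top.
Qed.

Lemma coef_comp_top1 : Q`_(5 + k) = - (6 + k)%:R * a * c.
Proof.
rewrite coef_comp_top; last lia.
rewrite (coef_XsubC_expD c 1 (5 + k)) [X in e * X]nth_default ?[X in b * X]nth_default
  ?size_exp_XsubC; try lia.
by eval_top.
Qed.

Lemma coef_comp_top2 : Q`_(4 + k) = (6 + k)%:R * (5 + k)%:R / 2 * a * c ^+ 2 + b.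
Proof.
rewrite coef_comp_top; last lia.
rewrite (coef_XsubC_expD c 2 (4 + k)) (coef_XsubC_expD c 0 (4 + k))
  [X in e * X]nth_default ?size_exp_XsubC; try lia.
by eval_top.
Qed.

Lemma coef_comp_top3 :
  Q`_(3 + k) = - (6 + k)%:R * (5 + k)%:R * (4 + k)%:R / 6 * a * c ^+ 3 - (4 + k)%:R * b * c.
Proof.
rewrite coef_comp_top; last lia.
rewrite (coef_XsubC_expD c 3 (3 + k)) (coef_XsubC_expD c 1 (3 + k))
  [X in e * X]nth_default ?size_exp_XsubC; try lia.
by eval_top.
Qed.

Lemma coef_comp_top4 :
  Q`_(2 + k) = (6 + k)%:R * (5 + k)%:R * (4 + k)%:R * (3 + k)%:R / 24 * a * c ^+ 4
               + (4 + k)%:R * (3 + k)%:R / 2 * b * c ^+ 2 + e.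
Proof.
rewrite coef_comp_top; last lia.
rewrite (coef_XsubC_expD c 4 (2 + k)) (coef_XsubC_expD c 2 (2 + k)) (coef_XsubC_expD c 0 (2 + k)).
by eval_top.
Qed.

Lemma coef_comp_top5 :
  Q`_(1 + k) = - (6 + k)%:R * (5 + k)%:R * (4 + k)%:R * (3 + k)%:R * (2 + k)%:R / 120 * a * c ^+ 5
               - (4 + k)%:R * (3 + k)%:R * (2 + k)%:R / 6 * b * c ^+ 3 - (2 + k)%:R * e * c.
Proof.
rewrite coef_comp_top; last lia.
rewrite (coef_XsubC_expD c 5 (1 + k)) (coef_XsubC_expD c 3 (1 + k)) (coef_XsubC_expD c 1 (1 + k)).
by eval_top.
Qed.

Variable d : nat -> F.
Hypothesis Q_cheb : Q = \sum_(i < 7 + k) d i *: chebT F i.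
Hypothesis c_neq0 : c != 0.

Let a_neq0 : a != 0.
Proof. by have := lead_coef_eq0 R; rewrite lead_coefE -size_poly_eq0 size_R => ->. Qed.

Lemma Ch23_zero_delta_eq : d (4 + k) = 0 -> d (3 + k) = 0 ->
  ((5 + k) * (4 + k))%N%:R * (4 * c) ^+ 2 = 12.
Proof.
move=> d4 d3.
(* The multiplier of the d_(n-2) relation is chosen to cancel b. *)
have : (6 + k)%:R * a * c * (((5 + k) * (4 + k))%N%:R * (4 * c) ^+ 2 - 12)
       = 12 * ((4 * Q`_(3 + k) + (5 + k)%:R * Q`_(5 + k))
               + (4 + k)%:R * c * (4 * Q`_(4 + k) + (6 + k)%:R * Q`_(6 + k))).
  by rewrite coef_comp_top0 coef_comp_top1 coef_comp_top2 coef_comp_top3 natrM; field.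
rewrite -(cheb_coord_top2 Q_cheb) -(cheb_coord_top3 Q_cheb) d3 d4 !mulr0 addr0 mulr0 => /eqP.
by rewrite !mulf_eq0 (negbTE a_neq0) (negbTE c_neq0) pnatr_eq0 subr_eq0 => /eqP.
Qed.

Lemma Ch245_zero_delta_eq : d (4 + k) = 0 -> d (2 + k) = 0 -> d (1 + k) = 0 ->
  ((5 + k) * (2 + k) * ((4 + k) * (3 + k)))%N%:R * ((4 * c) ^+ 2) ^+ 2
  - (30 * ((4 + k) * (3 + k)))%N%:R * (4 * c) ^+ 2 + 120 = 0.
Proof.
move=> d4 d2 d1; set G := (X in X = 0).
(* The multipliers of the d_(n-4) and d_(n-2) relations cancel e, then b. *)
have : (6 + k)%:R * a * c * G
       = - 60 * (32 * Q`_(1 + k) + 8 * (3 + k)%:R * Q`_(3 + k) + (5 + k)%:R * (4 + k)%:R * Q`_(5 + k))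
         - 60 * (2 + k)%:R * c * (32 * Q`_(2 + k) + 8 * (4 + k)%:R * Q`_(4 + k)
                                  + (6 + k)%:R * (5 + k)%:R * Q`_(6 + k))
         + (160 * (4 + k)%:R * (3 + k)%:R * (2 + k)%:R * c ^+ 3 - 120 * (4 + k)%:R * c)
           * (4 * Q`_(4 + k) + (6 + k)%:R * Q`_(6 + k)).
  rewrite /G coef_comp_top0 coef_comp_top1 coef_comp_top2 coef_comp_top3 coef_comp_top4 coef_comp_top5.
  by rewrite !natrM; field.
rewrite -(cheb_coord_top2 Q_cheb) -(cheb_coord_top4 Q_cheb) -(cheb_coord_top5 Q_cheb) d4 d2 d1.
rewrite !mulr0 subrr add0r => /eqP.
by rewrite !mulf_eq0 (negbTE a_neq0) (negbTE c_neq0) pnatr_eq0 => /eqP.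
Qed.

End EvenShift.

Lemma zcontents_dvd_coef (q : {poly int}) i : (zcontents q %| q`_i)%Z.
Proof. by move: (dvdz_contents (zcontents q) q); rewrite dvdzz => /esym/polyOverP. Qed.

Lemma lead_coef_dvd_zcontents (p q : {poly int}) :
  p \is monic -> q %| p -> (lead_coef q %| zcontents q)%Z.
Proof.
move=> p_monic /modp_eq0P dvd_qp.
have [->|q_neq0] := eqVneq q 0; first by rewrite lead_coef0 zcontents0.
have := Pdiv.Idomain.divp_eq p q; rewrite dvd_qp addr0.
set c := _ ^+ _; set h := p %/ q => ch.
have c_neq0 : c != 0 by rewrite expf_neq0 // lead_coef_eq0.
have c_contents : c = zcontents h * zcontents q.
  by rewrite -zcontentsM -ch zcontentsZ zcontents_monic // mulr1.
have c_lead : c = lead_coef h * lead_coef q.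
  by rewrite -lead_coefM -ch lead_coefZ (monicP p_monic) mulr1.
have /dvdzP[t lead_h] : (zcontents h %| lead_coef h)%Z by rewrite lead_coefE zcontents_dvd_coef.
have zh_neq0 : zcontents h != 0 by apply: contraNneq c_neq0 => h0; rewrite c_contents h0 mul0r.
apply/dvdzP; exists t; apply: (mulfI zh_neq0).
by rewrite -c_contents c_lead lead_h; ring.
Qed.

Section IntegralRoots.
Variable F : numDomainType.
Notation "p ^z" := (map_poly (intr : int -> F) p) (at level 2, format "p ^z").

Lemma root_modp_int (p q : {poly int}) (z : F) :
  root p^z z -> root q^z z -> root (p %% q)^z z.
Proof.
move=> /rootP pz /rootP qz; apply/rootP.
have /(congr1 (fun r => r^z.[z])) := Pdiv.Idomain.divp_eq p q.
rewrite map_polyZ rmorphD rmorphM /= hornerD hornerM hornerZ pz qz !mulr0 add0r.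
by move/esym.
Qed.

Lemma size_map_intr (p : {poly int}) : size p^z = size p.
Proof. by apply: size_map_inj_poly => // m n /eqP; rewrite eqr_int => /eqP. Qed.

Lemma horner_map_intr_size2 (r : {poly int}) (z : F) : (size r <= 2)%N ->
  r^z.[z] = (r`_0)%:~R + (r`_1)%:~R * z.
Proof.
move=> size_r; rewrite (@horner_coef_wide _ 2) ?size_map_intr // !big_ord_recr big_ord0 /=.
by rewrite !coef_map /= add0r expr0 expr1 mulr1.
Qed.

Lemma algint_root_linear (p r : {poly int}) (z : F) : p \is monic ->
  root p^z z -> size r = 2%N -> root r^z z -> exists t : int, z = t%:~R.
Proof.
move=> p_monic pz size_r rz.
have r_neq0 : r != 0 by rewrite -size_poly_eq0 size_r.
have size_s : (size (p %% r)%R < 2)%N by rewrite -size_r ltn_modp.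
have dvd_rp : r %| p.
  apply/modp_eq0P.
  have := root_modp_int pz rz; rewrite /root horner_map_intr_size2; last exact: ltnW.
  rewrite [(p %% r)`_1]nth_default // mulr0z mul0r addr0 intr_eq0 => /eqP s00.
  by apply/polyP => -[|i]; rewrite coef0 // nth_default // -ltnS (leq_trans size_s).
have /dvdzP[t r0] := dvdz_trans (lead_coef_dvd_zcontents p_monic dvd_rp)
  (zcontents_dvd_coef r 0).
have lead_r : lead_coef r = r`_1 by rewrite lead_coefE size_r.
have r1_neq0 : (r`_1)%:~R != 0 :> F by rewrite intr_eq0 -lead_r lead_coef_eq0.
move: rz; rewrite /root horner_map_intr_size2 ?size_r // r0 lead_r intrM mulrC -mulrDr.
rewrite mulf_eq0 (negbTE r1_neq0) addrC addr_eq0 => /eqP ->.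
by exists (- t); rewrite mulrNz.
Qed.

Lemma algint_root_quadratic (q : {poly int}) (z : F) : is_algint z ->
  size q = 3%N -> root q^z z -> (lead_coef q %| zcontents q)%Z \/ exists t : int, z = t%:~R.
Proof.
move=> [p [p_monic pz]] size_q qz.
have q_neq0 : q != 0 by rewrite -size_poly_eq0 size_q.
have rz := root_modp_int pz qz.
have [r0|r_neq0] := eqVneq (p %% q) 0.
  by left; apply: lead_coef_dvd_zcontents p_monic _; apply/modp_eq0P.
have size_r : size (p %% q) = 2%N.
  have : size (p %% q) != 1%N.
    apply: contraTneq rz => size1; rewrite /root horner_map_intr_size2 ?size1 //.
    rewrite [(p %% q)`_1]nth_default ?size1 // mul0r addr0 intr_eq0.
    by rewrite (_ : _`_0 = lead_coef (p %% q)) ?lead_coef_eq0 // lead_coefE size1.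
  have : (size (p %% q)%R < 3)%N by rewrite -size_q ltn_modp.
  by move: r_neq0; rewrite -size_poly_gt0; lia.
by right; apply: algint_root_linear p_monic pz size_r rz.
Qed.

Lemma algint_quadratic_eq (z : F) (a b c : int) : is_algint z -> a != 0 ->
  a%:~R * z ^+ 2 + b%:~R * z + c%:~R = 0 -> (a %| c)%Z \/ exists t : int, z = t%:~R.
Proof.
move=> z_int a_neq0 qz; pose q := Poly [:: c; b; a].
have q_seq : q = [:: c; b; a] :> seq int by rewrite (@PolyK _ 0).
have size_q : size q = 3%N by rewrite q_seq.
have lead_q : lead_coef q = a by rewrite lead_coefE size_q q_seq.
have root_q : root q^z z.
  apply/rootP; rewrite (@horner_coef_wide _ 3) ?size_map_intr ?size_q //.
  by rewrite !big_ord_recr big_ord0 /= !coef_map q_seq /= add0r expr0 expr1 -qz; ring.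
have [|] := algint_root_quadratic z_int size_q root_q; last by right.
by rewrite lead_q => /dvdz_trans/(_ (zcontents_dvd_coef q 0)); rewrite q_seq; left.
Qed.

Lemma not_algint_sqr_ratio (z : F) (A m : nat) :
  (0 < m < A)%N -> A%:R * z ^+ 2 = m%:R -> ~ is_algint z.
Proof.
move=> /andP[m_gt0 lt_mA] eq_z z_int.
have A_neq0 : A%:Z != 0 by rewrite eqz_nat -lt0n (leq_ltn_trans _ lt_mA).
have : A%:~R * z ^+ 2 + 0%:~R * z + (- m%:Z)%:~R = 0.
  by rewrite mulr0z mul0r addr0 mulrNz -!pmulrn eq_z subrr.
case/(algint_quadratic_eq z_int A_neq0) => [|[t zt]].
  by rewrite dvdzE abszN => /(dvdn_leq m_gt0); rewrite leqNgt lt_mA.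
move: eq_z; rewrite zt -rmorphXn !pmulrn -intrM => /eqP; rewrite eqr_int => /eqP eq_m.
have [t0|t_neq0] := eqVneq t 0; first by move: eq_m; rewrite t0 expr0n mulr0; lia.
have : 1 <= t ^+ 2 by rewrite expr2; nia.
nia.
Qed.

Lemma not_algint_quadratic (w : F) (A C D : nat) : (0 < D < A)%N -> (C <= A)%N ->
  A%:R * w ^+ 2 - C%:R * w + D%:R = 0 -> ~ is_algint w.
Proof.
move=> /andP[D_gt0 lt_DA] le_CA eq_w w_int.
have A_neq0 : A%:Z != 0 by rewrite eqz_nat -lt0n (leq_ltn_trans _ lt_DA).
have : A%:~R * w ^+ 2 + (- C%:Z)%:~R * w + D%:~R = 0 by rewrite mulrNz mulNr -!pmulrn.
case/(algint_quadratic_eq w_int A_neq0) => [|[t wt]].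
  by rewrite dvdzE /= => /(dvdn_leq D_gt0); rewrite leqNgt lt_DA.
move: eq_w; rewrite wt -rmorphXn !pmulrn -!intrM -intrB -intrD => /eqP; rewrite intr_eq0 => /eqP.
rewrite expr2; have [t_le0|t_gt0] := lerP t 0; nia.
Qed.
End IntegralRoots.

Lemma is_algintM (K : comNzRingType) (x y : K) :
  is_algint x -> is_algint y -> is_algint (x * y).
Proof.
move=> [p [p_monic px]] [q [q_monic qy]].
have [r r_monic rxy] : integralOver (intr : int -> K) (x * y).
  by apply: integral_mul; [exists p | exists q].
by exists r.
Qed.

Theorem corollary3p3 (F : realFieldType) (R : {poly F}) (delta : F) :
  let Q := R \Po (('X - delta%:P) ^+ 2) in
  let n := (size Q).-1 in
  ((6 <= n)%N -> Ch_zero Q [:: 2%N; 3%N] ->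
     delta != 0 -> ~ is_algint (4 * delta)) /\
  ((9 <= n)%N -> Ch_zero Q [:: 2%N; 4%N; 5%N] ->
     delta != 0 -> ~ is_algint (4 * delta)).
Proof.
move=> Q n.
have n_eq : n = ((size R).-1).*2 by rewrite /n size_comp_poly size_exp_XsubC muln2.
have shape : (6 <= n)%N -> exists s, (size R = 4 + s /\ n = 6 + s.*2)%N.
  by move=> n_ge6; exists ((size R).-1 - 3)%N; lia.
split=> [n_ge6 | n_ge9] [d [Q_cheb d_eq0]] delta_neq0;
  have [s [size_R deg_Q]] := shape (ltac:(lia) : (6 <= n)%N);
  rewrite /cheb_coords -/n deg_Q in Q_cheb d_eq0.
- apply: (@not_algint_sqr_ratio _ _ ((5 + s.*2) * (4 + s.*2)) 12); first lia.
  exact (Ch23_zero_delta_eq size_R Q_cheb delta_neq0 (d_eq0 2 isT) (d_eq0 3 isT)).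
- move=> /(fun delta_int => is_algintM delta_int delta_int); rewrite -expr2.
  apply: (@not_algint_quadratic _ _ ((5 + s.*2) * (2 + s.*2) * ((4 + s.*2) * (3 + s.*2)))
            (30 * ((4 + s.*2) * (3 + s.*2))) 120); try nia.
  exact (Ch245_zero_delta_eq size_R Q_cheb delta_neq0 (d_eq0 2 isT) (d_eq0 4 isT) (d_eq0 5 isT)).
Qed.
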